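(* Let $\{1/N,\rho_x\}_{x=1}^N$ be an ensemble of density operators on a finite-dimensional Hilbert space given with equal prior probabilities $1/N$, and let $K$, $\{r_x,\sigma_x\}$, $\{M_x\}$ be a symmetry operator, complementary states and POVM, i.e. $K$ Hermitian, $r_x\ge 0$, $\sigma_x$ density operators, $\{M_x\}$ a POVM, with $K=\frac1N\rho_x+r_x\sigma_x$ and $r_x\mathrm{tr}[M_x\sigma_x]=0$ for all $x$. Then all $r_x$ are equal to a common value $r$, and $$P_{\mathrm{guess}}=\frac1N+r,$$ where $r=\dfrac{\|\frac1N\rho_x-\frac1N\rho_y\|_1}{\|\sigma_x-\sigma_y\|_1}$ for any $x,y$ with $\sigma_x\ne\sigma_y$.
   Context: $P_{\mathrm{guess}}=\max_{\{M_x\}}\sum_x \frac1N\mathrm{tr}[M_x\rho_x]$ over POVMs (positive semidefinite operators summing to the identity). $\|\cdot\|_1$ is the trace norm. *)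

From HB Require Import structures.
From mathcomp Require Import all_boot all_order all_algebra.
Set Implicit Arguments. Unset Strict Implicit. Unset Printing Implicit Defensive.
Import Order.TTheory GRing.Theory Num.Theory.
Local Open Scope ring_scope.

Definition adjmx (C : numClosedFieldType) m n (A : 'M[C]_(m, n)) : 'M[C]_(n, m) :=
  map_mx Num.conj (A^T).

Definition is_hermitian (C : numClosedFieldType) d (A : 'M[C]_d) : Prop :=
  A = adjmx A.

Definition psd (C : numClosedFieldType) d (A : 'M[C]_d) : Prop :=
  is_hermitian A /\ forall v : 'rV[C]_d, 0 <= (v *m A *m adjmx v) 0 0.

Definition density (C : numClosedFieldType) d (rho : 'M[C]_d) : Prop :=
  psd rho /\ \tr rho = 1.

Definition povm (C : numClosedFieldType) d N (M : 'I_N -> 'M[C]_d) : Prop :=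
  (forall x, psd (M x)) /\ \sum_(x < N) M x = 1%:M.

Definition succ_prob (C : numClosedFieldType) d N (rho M : 'I_N -> 'M[C]_d) : C :=
  \sum_(x < N) N%:R^-1 * \tr (M x *m rho x).

Definition is_Pguess (C : numClosedFieldType) d N (rho : 'I_N -> 'M[C]_d) (p : C)
  : Prop :=
  (exists M, povm M /\ succ_prob rho M = p) /\
  (forall M, povm M -> succ_prob rho M <= p).

(* trace norm ||A||_1 = tr sqrt(A^* A): A^* A is Hermitian PSD, with spectral
   decomposition A^* A = P^-1 diag(D) P (P unitary), so sqrt(A^* A) =
   P^-1 diag(sqrt D) P and its trace is the sum of the sqrt of the entries of D. *)
Definition trnorm (C : numClosedFieldType) d (A : 'M[C]_d) : C :=
  \sum_(i < d) sqrtC (spectral_diag (adjmx A *m A) 0 i).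

From HB Require Import structures.
From mathcomp Require Import all_boot all_order all_algebra.
Import Order.TTheory GRing.Theory Num.Theory.
Local Open Scope ring_scope.
Set Implicit Arguments. Unset Strict Implicit. Unset Printing Implicit Defensive.

(* Taking traces in K = rho_x/N + r_x sigma_x gives tr K = 1/N + r_x, so r_x is
   constant.  For any POVM, sum_x tr(M_x rho_x)/N = tr K - r sum_x tr(M_x sigma_x)
   <= tr K, with equality for the complementary POVM.  Finally
   rho_x/N - rho_y/N = -r (sigma_x - sigma_y), and the trace norm is absolutely
   homogeneous and definite. *)

Section TraceNorm.
Variable C : numClosedFieldType.
Local Open Scope sesquilinear_scope.

Lemma adjmxE m n (A : 'M[C]_(m, n)) : adjmx A = A ^t*.
Proof. by []. Qed.

Lemma adjmxM m n p (A : 'M[C]_(m, n)) (B : 'M[C]_(n, p)) :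
  adjmx (A *m B) = adjmx B *m adjmx A.
Proof. by rewrite !adjmxE trmx_mul map_mxM. Qed.

Lemma adjmxK m n (A : 'M[C]_(m, n)) : adjmx (adjmx A) = A.
Proof. by rewrite !adjmxE trmxCK. Qed.

Lemma adjmxZ m n c (A : 'M[C]_(m, n)) : adjmx (c *: A) = c^* *: adjmx A.
Proof. by apply/matrixP => i j; rewrite !mxE rmorphM. Qed.

Lemma hermitian_spectral_decomp d (X : 'M[C]_d) : is_hermitian X ->
  X = adjmx (spectralmx X) *m diag_mx (spectral_diag X) *m spectralmx X.
Proof.
rewrite /is_hermitian adjmxE => hX.
have /orthomx_spectralP defX : X \is normalmx by apply/normalmxP; rewrite -hX.
by rewrite adjmxE -invmx_unitary ?spectral_unitarymx.
Qed.

Lemma hermitian_spectral_conj d (X : 'M[C]_d) : is_hermitian X ->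
  spectralmx X *m X *m adjmx (spectralmx X) = diag_mx (spectral_diag X).
Proof.
move=> hX; rewrite {2}(hermitian_spectral_decomp hX) adjmxE.
rewrite -invmx_unitary ?spectral_unitarymx // !mulmxA mulmxV ?spectral_unit //.
by rewrite mul1mx -mulmxA mulmxV ?spectral_unit // mulmx1.
Qed.

Lemma psd_conj_diag_ge0 d (A P : 'M[C]_d) i : psd A -> 0 <= (P *m A *m adjmx P) i i.
Proof.
case=> _ /(_ (row i P)); congr (0 <= _).
rewrite !mxE; apply: eq_bigr => j _; rewrite !mxE; congr (_ * _).
by apply: eq_bigr => k _; rewrite !mxE.
Qed.

Lemma psd_spectral_diag_ge0 d (X : 'M[C]_d) i : psd X -> 0 <= spectral_diag X 0 i.
Proof.
move=> pX; have := psd_conj_diag_ge0 (spectralmx X) i pX.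
by rewrite hermitian_spectral_conj ?mxE ?eqxx ?mulr1n //; case: pX.
Qed.

Lemma mxtrace_psd_mul_ge0 d (A B : 'M[C]_d) : psd A -> psd B -> 0 <= \tr (A *m B).
Proof.
move=> pA pB; rewrite [B in A *m B](hermitian_spectral_decomp pB.1) !mulmxA.
rewrite mxtrace_mulC !mulmxA mul_mx_diag /mxtrace; apply: sumr_ge0 => i _.
by rewrite mxE mulr_ge0 ?psd_conj_diag_ge0 ?psd_spectral_diag_ge0.
Qed.

Lemma psd_adjmx_mul d (A : 'M[C]_d) : psd (adjmx A *m A).
Proof.
split=> [|v]; first by rewrite /is_hermitian adjmxM adjmxK.
rewrite mulmxA -mulmxA -[A *m _]adjmxK adjmxM adjmxK mxE.
by apply: sumr_ge0 => j _; rewrite !mxE mul_conjC_ge0.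
Qed.

Lemma char_poly_conj_unit d (P A : 'M[C]_d) : P \in unitmx ->
  char_poly (invmx P *m A *m P) = char_poly A.
Proof.
move=> uP; have conj_char_mx : char_poly_mx (invmx P *m A *m P) =
    map_mx polyC (invmx P) *m char_poly_mx A *m map_mx polyC P.
  rewrite /char_poly_mx mulmxBr mulmxBl -!map_mxM scalar_mxC.
  by rewrite -(mulmxA 'X%:M) -map_mxM mulVmx // map_mx1 mulmx1.
rewrite /char_poly conj_char_mx !det_mulmx !det_map_mx mulrC mulrA -rmorphM.
by rewrite -det_mulmx mulmxV // det1 rmorph1 mul1r.
Qed.

(* [spectral_diag] is an arbitrary choice of eigenvalue ordering, so any other
   diagonalisation of [X] lists the same eigenvalues up to permutation. *)
Lemma big_spectral_diag_similar d (X P : 'M[C]_d) (s : 'rV[C]_d) (f : C -> C) :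
  is_hermitian X -> P \in unitmx -> X = invmx P *m diag_mx s *m P ->
  \sum_(i < d) f (spectral_diag X 0 i) = \sum_(i < d) f (s 0 i).
Proof.
move=> hX uP defX.
have U := spectral_unitarymx X.
have char_diag (t : 'rV[C]_d) : char_poly (diag_mx t) =
    \prod_(x <- [seq t 0 i | i <- enum 'I_d]) ('X - x%:P).
  rewrite char_poly_trig ?diag_mx_is_trig // big_map big_enum /=.
  by apply: eq_bigr => i _; rewrite mxE eqxx mulr1n.
have perm_eig : perm_eq [seq spectral_diag X 0 i | i <- enum 'I_d]
                        [seq s 0 i | i <- enum 'I_d].
  apply: prod_XsubC_eq; rewrite -!char_diag.
  rewrite -(char_poly_conj_unit _ (unitarymx_unit U)) -(char_poly_conj_unit _ uP).
  by rewrite -defX invmx_unitary // -adjmxE -hermitian_spectral_decomp.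
have sum_seq (t : 'I_d -> C) :
    \sum_(i < d) f (t i) = \sum_(x <- [seq t i | i <- enum 'I_d]) f x.
  by rewrite big_map big_enum.
by rewrite !sum_seq (perm_big _ perm_eig).
Qed.

Lemma trnormZ d c (A : 'M[C]_d) : trnorm (c *: A) = `|c| * trnorm A.
Proof.
rewrite /trnorm adjmxZ -scalemxAr -scalemxAl scalerA.
set X := adjmx A *m A.
have hX : is_hermitian X := (psd_adjmx_mul A).1.
have uP := spectral_unit X.
have defcX : (c * c^*) *: X =
    invmx (spectralmx X) *m diag_mx ((c * c^*) *: spectral_diag X) *m spectralmx X.
  rewrite invmx_unitary ?spectral_unitarymx // -adjmxE.
  rewrite {1}(hermitian_spectral_decomp hX) scalemxAl scalemxAr.
  by congr (_ *m _ *m _); apply/matrixP => i j; rewrite !mxE mulrnAr.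
have hcX : is_hermitian ((c * c^*) *: X).
  by have := (psd_adjmx_mul (c *: A)).1; rewrite adjmxZ -scalemxAr -scalemxAl scalerA.
rewrite (big_spectral_diag_similar sqrtC hcX uP defcX) mulr_sumr.
apply: eq_bigr => i _; have := psd_spectral_diag_ge0 i (psd_adjmx_mul A).
by rewrite mxE -normCK => ?; rewrite sqrtCM ?nnegrE ?exprn_ge0 // sqrCK.
Qed.

Lemma trnorm_eq0 d (A : 'M[C]_d) : trnorm A = 0 -> A = 0.
Proof.
rewrite /trnorm => /eqP; rewrite psumr_eq0 => [/allP eig0|i _]; last first.
  by rewrite sqrtC_ge0; apply/psd_spectral_diag_ge0/psd_adjmx_mul.
have AA0 : adjmx A *m A = 0.
  rewrite (hermitian_spectral_decomp (psd_adjmx_mul A).1).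
  suff -> : spectral_diag (adjmx A *m A) = 0 by rewrite linear0 mulmx0 mul0mx.
  by apply/rowP => i; have := eig0 i (mem_index_enum _); rewrite /= sqrtC_eq0 mxE => /eqP.
apply/matrixP => i j; have /matrixP /(_ j j) /eqP := AA0; rewrite !mxE.
rewrite psumr_eq0 => [/allP /(_ i (mem_index_enum _))|k _]; rewrite !mxE mulrC.
  by rewrite mul_conjC_eq0 => /eqP.
exact: mul_conjC_ge0.
Qed.

Lemma trnorm_ratio d c (A B : 'M[C]_d) :
  B != 0 -> A = c *: B -> `|c| = trnorm A / trnorm B.
Proof.
move=> nzB ->; rewrite trnormZ mulfK //.
by apply: contra nzB => /eqP /trnorm_eq0 ->.
Qed.

End TraceNorm.

Lemma mxtrace_density_comb (C : numClosedFieldType) d (a b : C) (rho sigma : 'M[C]_d) :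
  density rho -> density sigma -> \tr (a *: rho + b *: sigma) = a + b.
Proof. by move=> [_ tr_rho] [_ tr_sigma]; rewrite mxtraceD !mxtraceZ tr_rho tr_sigma !mulr1. Qed.

Section Ensemble.
Variables (C : numClosedFieldType) (d N : nat) (r : C).
Variables (rho sigma : 'I_N -> 'M[C]_d) (K : 'M[C]_d).
Hypothesis defK : forall x, K = N%:R^-1 *: rho x + r *: sigma x.

Lemma succ_prob_symmetry M : \sum_(x < N) M x = 1%:M ->
  succ_prob rho M = \tr K - r * \sum_(x < N) \tr (M x *m sigma x).
Proof.
move=> sumM1; rewrite /succ_prob mulr_sumr.
have -> : \tr K = \sum_(x < N) \tr (M x *m K) by rewrite -raddf_sum -mulmx_suml sumM1 mul1mx.
rewrite -sumrB; apply: eq_bigr => x _.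
by rewrite (defK x) mulmxDr -!scalemxAr mxtraceD !mxtraceZ addrK.
Qed.

Lemma is_Pguess_symmetry M : 0 <= r -> (forall x, psd (sigma x)) -> povm M ->
  (forall x, r * \tr (M x *m sigma x) = 0) -> is_Pguess rho (\tr K).
Proof.
move=> r_ge0 psd_sigma [psdM sumM1] compl; split.
  exists M; split => //.
  by rewrite succ_prob_symmetry // mulr_sumr big1 ?subr0.
move=> M' [psdM' sumM'1]; rewrite succ_prob_symmetry // lerBlDr lerDl.
by rewrite mulr_ge0 ?sumr_ge0 // => x _; apply: mxtrace_psd_mul_ge0.
Qed.

Lemma scaled_rho_sub x y :
  N%:R^-1 *: rho x - N%:R^-1 *: rho y = r *: (sigma y - sigma x).
Proof.
have defrho z : N%:R^-1 *: rho z = K - r *: sigma z by rewrite (defK z) addrK.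
by rewrite !defrho opprB addrC addrA subrK scalerBr.
Qed.

End Ensemble.

Theorem proposition3 (C : numClosedFieldType) (d N : nat) (HN : (0 < N)%N)
  (rho : 'I_N -> 'M[C]_d) (K : 'M[C]_d) (r : 'I_N -> C)
  (sigma M : 'I_N -> 'M[C]_d) :
  (forall x, density (rho x)) ->
  is_hermitian K ->
  (forall x, 0 <= r x) ->
  (forall x, density (sigma x)) ->
  povm M ->
  (forall x, K = N%:R^-1 *: rho x + r x *: sigma x) ->
  (forall x, r x * \tr (M x *m sigma x) = 0) ->
  exists r0 : C,
    (forall x, r x = r0) /\
    is_Pguess rho (N%:R^-1 + r0) /\
    (forall x y, sigma x != sigma y ->
       r0 = trnorm (N%:R^-1 *: rho x - N%:R^-1 *: rho y)
            / trnorm (sigma x - sigma y)).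
Proof.
move=> density_rho _ r_ge0 density_sigma povmM defK compl.
set r0 := \tr K - N%:R^-1.
have r_const x : r x = r0.
  by rewrite /r0 (defK x) mxtrace_density_comb // addrC addKr.
have defK0 x : K = N%:R^-1 *: rho x + r0 *: sigma x by rewrite -(r_const x).
have r0_ge0 : 0 <= r0 by rewrite -(r_const (Ordinal HN)).
exists r0; split => //; split.
  rewrite /r0 addrC subrK; apply: (is_Pguess_symmetry defK0 r0_ge0 _ povmM).
    by move=> x; case: (density_sigma x).
  by move=> x; rewrite -(r_const x).
move=> x y neq_xy; rewrite -[r0]ger0_norm // -normrN.
apply: trnorm_ratio; first by rewrite subr_eq0.
by rewrite (scaled_rho_sub defK0) scaleNr -scalerN opprB.
Qed.
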